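(* Let $S$ be a set and let $f:2^S\to 2^S$ be monotonic with respect to $\subseteq$. Then: (1) $(\nu f,\ \nu f\times\nu f)$ is a support ordering for $f$; (2) there is a well-ordering ${\prec}\subseteq \mu f\times\mu f$ such that $(\mu f,\prec)$ is a support ordering for $f$.
   Context: The Axiom of Choice is assumed. $\mu f$ and $\nu f$ are the least and greatest fixpoints of $f$ in $(2^S,\subseteq)$. For a binary relation ${\prec}$ on $X$ and $x\in X$, $\prec^{-1}(x)=\{x'\in X\mid x'\prec x\}$. A pair $(X,\prec)$ is a support ordering for $f$ if $X\subseteq S$, ${\prec}\subseteq X\times X$, and $x\in f(\prec^{-1}(x))$ for every $x\in X$. A relation $R$ on $X$ is well-founded if every nonempty $Y\subseteq X$ has an element $y$ such that no $y'\in Y$, $y'\neq y$, satisfies $y' R y$; $R$ is a (strict) total order if it is irreflexive, transitive and any two distinct elements are comparable; a well-ordering is a well-founded total order. *)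

Definition subset {S : Type} (A B : S -> Prop) : Prop := forall x, A x -> B x.

Definition set_eq {S : Type} (A B : S -> Prop) : Prop := forall x, A x <-> B x.

Definition monotone {S : Type} (f : (S -> Prop) -> (S -> Prop)) : Prop :=
  forall A B, subset A B -> subset (f A) (f B).

Definition is_fixpoint {S : Type} (f : (S -> Prop) -> (S -> Prop)) (M : S -> Prop) : Prop :=
  set_eq (f M) M.

Definition is_least_fixpoint {S : Type} (f : (S -> Prop) -> (S -> Prop)) (M : S -> Prop) : Prop :=
  is_fixpoint f M /\ forall X, is_fixpoint f X -> subset M X.

Definition is_greatest_fixpoint {S : Type} (f : (S -> Prop) -> (S -> Prop)) (N : S -> Prop) : Prop :=
  is_fixpoint f N /\ forall X, is_fixpoint f X -> subset X N.

Definition pred_of {S : Type} (prec : S -> S -> Prop) (x : S) : S -> Prop :=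
  fun x' => prec x' x.

(* (X, prec) is a support ordering for f: prec ⊆ X × X and
   x ∈ f(prec^{-1}(x)) for every x ∈ X.  (X ⊆ S is automatic.) *)
Definition support_ordering {S : Type} (f : (S -> Prop) -> (S -> Prop))
    (X : S -> Prop) (prec : S -> S -> Prop) : Prop :=
  (forall a b, prec a b -> X a /\ X b) /\
  (forall x, X x -> f (pred_of prec x) x).

Definition well_founded_on {S : Type} (X : S -> Prop) (R : S -> S -> Prop) : Prop :=
  forall Y : S -> Prop, subset Y X -> (exists y, Y y) ->
    exists y, Y y /\ forall y', Y y' -> y' <> y -> ~ R y' y.

Definition strict_total_order_on {S : Type} (X : S -> Prop) (R : S -> S -> Prop) : Prop :=
  (forall x, X x -> ~ R x x) /\
  (forall x y z, X x -> X y -> X z -> R x y -> R y z -> R x z) /\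
  (forall x y, X x -> X y -> x <> y -> R x y \/ R y x).

Definition well_ordering_on {S : Type} (X : S -> Prop) (R : S -> S -> Prop) : Prop :=
  well_founded_on X R /\ strict_total_order_on X R.

(* Grow a tower of subsets of [S] (its members are called stages): the
   successor of a stage [A] adds one chosen point of [f A \ A], if there is
   one, and the tower is closed under arbitrary unions.  Any two stages [A], [B]
   satisfy [B ⊆ A] or [succ A ⊆ B].  Every stage lies in [mu f], and a stage
   missing a point of [mu f] is not [f]-closed, so its successor really adds a
   point.  Ordering the points of [mu f] by the stage at which they enter the
   tower gives a well-ordering, and the point added to the stage just below [y]
   is [y] itself, an element of [f] of that stage: this is the support
   condition.  For [nu f] the support condition is just [nu f ⊆ f (nu f)]. *)

From Stdlib Require Import Classical ClassicalEpsilon FunctionalExtensionality PropExtensionality.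

Lemma subset_antisym {S : Type} (A B : S -> Prop) : subset A B -> subset B A -> A = B.
Proof.
  intros AB BA. apply functional_extensionality. intro x.
  apply propositional_extensionality. split; auto.
Qed.

Definition strict_subset {S : Type} (A B : S -> Prop) : Prop := subset A B /\ ~ subset B A.

Definition bigcup {S : Type} (F : (S -> Prop) -> Prop) : S -> Prop :=
  fun x => exists B, F B /\ B x.

Lemma postfixpoint_support_ordering {S : Type} (f : (S -> Prop) -> (S -> Prop)) (X : S -> Prop) :
  monotone f -> subset X (f X) -> support_ordering f X (fun a b => X a /\ X b).
Proof.
  intros f_mono X_post. split.
  - intros a b Hab. exact Hab.
  - intros x Xx. apply (f_mono X); [intros a Xa; now split | now apply X_post].
Qed.

Section Tower.

Variables (S : Type) (f : (S -> Prop) -> (S -> Prop)).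

Definition succ (A : S -> Prop) : S -> Prop :=
  match excluded_middle_informative (exists y, f A y /\ ~ A y) with
  | left new => fun x => A x \/ x = proj1_sig (constructive_indefinite_description _ new)
  | right _ => A
  end.

Lemma succ_spec (A : S -> Prop) :
  (subset (f A) A /\ succ A = A) \/
  (exists y, f A y /\ ~ A y /\ forall x, succ A x <-> A x \/ x = y).
Proof.
  unfold succ. destruct excluded_middle_informative as [new | no_new].
  - right. destruct constructive_indefinite_description as [y [fAy nAy]]; simpl.
    exists y. repeat split; tauto.
  - left. split; [|reflexivity].
    intros x fAx. apply NNPP. intro nAx. apply no_new. eauto.
Qed.

Lemma subset_succ (A : S -> Prop) : subset A (succ A).
Proof.
  intros x Ax. destruct (succ_spec A) as [[_ ->] | [y [_ [_ succ_eq]]]]; auto.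
  apply succ_eq; auto.
Qed.

Inductive tower : (S -> Prop) -> Prop :=
| tower_succ A : tower A -> tower (succ A)
| tower_bigcup (F : (S -> Prop) -> Prop) : (forall B, F B -> tower B) -> tower (bigcup F).

(* Extreme points in the sense of the Bourbaki–Witt/Kneser proof of Zorn's lemma. *)
Definition extreme (C : S -> Prop) : Prop :=
  forall B, tower B -> strict_subset B C -> subset (succ B) C.

Lemma extreme_split (C : S -> Prop) :
  extreme C -> forall B, tower B -> subset B C \/ subset (succ C) B.
Proof.
  intros C_ext B tB. induction tB as [B tB IH | F tF IH].
  - destruct IH as [BC | CB].
    + destruct (classic (subset C B)) as [CB | nCB].
      * right. rewrite (subset_antisym B C BC CB). intros x Cx; exact Cx.
      * left. apply C_ext; [exact tB | split; assumption].
    + right. intros x Cx. apply subset_succ. auto.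
  - destruct (classic (forall B, F B -> subset B C)) as [all_in | some_out].
    + left. intros x [B [FB Bx]]. exact (all_in B FB x Bx).
    + right. apply not_all_ex_not in some_out as [B BnC].
      apply imply_to_and in BnC as [FB nBC].
      destruct (IH B FB) as [BC | CB]; [contradiction |].
      intros x Cx. exists B. auto.
Qed.

Lemma tower_extreme (C : S -> Prop) : tower C -> extreme C.
Proof.
  intro tC. induction tC as [C tC IH | F tF IH]; intros B tB [B_sub nsub_B].
  - destruct (extreme_split C IH B tB) as [BC | CB]; [| contradiction].
    destruct (classic (subset C B)) as [CB | nCB].
    + rewrite (subset_antisym B C BC CB). intros x Cx; exact Cx.
    + intros x Bx. apply subset_succ. exact (IH B tB (conj BC nCB) x Bx).
  - destruct (classic (exists C, F C /\ strict_subset B C)) as [[C [FC BC]] | none].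
    + intros x Bx. exists C. split; [exact FC | exact (IH C FC B tB BC x Bx)].
    + exfalso. apply nsub_B. intros x [C [FC Cx]].
      destruct (extreme_split C (IH C FC) B tB) as [BC | CB].
      * apply NNPP. intro nBx. apply none. exists C.
        split; [exact FC | split; [exact BC | intro CB; exact (nBx (CB x Cx))]].
      * apply CB, subset_succ. exact Cx.
Qed.

Lemma tower_comparable (A B : S -> Prop) :
  tower A -> tower B -> subset B A \/ subset (succ A) B.
Proof. intros tA tB. exact (extreme_split A (tower_extreme A tA) B tB). Qed.

Definition tower_below (Y : S -> Prop) : S -> Prop :=
  bigcup (fun B => tower B /\ forall z, Y z -> ~ B z).

Lemma tower_tower_below (Y : S -> Prop) : tower (tower_below Y).
Proof. apply tower_bigcup. intros B [tB _]. exact tB. Qed.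

Lemma tower_below_disjoint (Y : S -> Prop) (z : S) : Y z -> ~ tower_below Y z.
Proof. intros Yz [B [[_ B_Y] Bz]]. exact (B_Y z Yz Bz). Qed.

Lemma tower_below_max (Y : S -> Prop) (B : S -> Prop) :
  tower B -> (forall z, Y z -> ~ B z) -> subset B (tower_below Y).
Proof. intros tB B_Y x Bx. exists B. auto. Qed.

Section LeastFixpoint.

Variable mu : S -> Prop.
Hypothesis f_mono : monotone f.
Hypothesis mu_lfp : is_least_fixpoint f mu.

(* Knaster–Tarski: the intersection of all prefixpoints is a fixpoint. *)
Lemma lfp_sub_prefixpoint (X : S -> Prop) : subset (f X) X -> subset mu X.
Proof.
  intro X_pre.
  pose (P := fun x => forall Y, subset (f Y) Y -> Y x).
  assert (P_pre : subset (f P) P).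
  { intros x fPx Y Y_pre. apply Y_pre. revert x fPx. apply f_mono.
    intros z Pz. exact (Pz Y Y_pre). }
  assert (P_post : subset P (f P)).
  { intros x Px. apply Px. apply f_mono. exact P_pre. }
  assert (mu_P : subset mu P) by (apply (proj2 mu_lfp); intro x; split; auto).
  intros x mux. exact (mu_P x mux X X_pre).
Qed.

Lemma tower_sub_lfp (B : S -> Prop) : tower B -> subset B mu.
Proof.
  intro tB. induction tB as [B tB IH | F tF IH].
  - destruct (succ_spec B) as [[_ ->] | [y [fBy [_ succ_eq]]]]; [exact IH |].
    intros x succBx. apply succ_eq in succBx as [Bx | ->]; [exact (IH x Bx) |].
    apply (proj1 mu_lfp). exact (f_mono B mu IH y fBy).
  - intros x [B [FB Bx]]. exact (IH B FB x Bx).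
Qed.

(* If [Y] meets [mu], the successor of [tower_below Y] adds a point, and that
   point lies in [Y]: otherwise the successor would be a stage disjoint from
   [Y], hence contained in [tower_below Y]. *)
Lemma succ_tower_below (Y : S -> Prop) :
  (exists y0, Y y0 /\ mu y0) ->
  exists y, Y y /\ f (tower_below Y) y /\
    forall x, succ (tower_below Y) x <-> tower_below Y x \/ x = y.
Proof.
  intros [y0 [Yy0 muy0]]. set (A := tower_below Y).
  destruct (succ_spec A) as [[A_pre _] | [y [fAy [nAy succ_eq]]]].
  - exfalso. exact (tower_below_disjoint Y y0 Yy0 (lfp_sub_prefixpoint A A_pre y0 muy0)).
  - exists y. split; [| split; assumption].
    apply NNPP. intro nYy. apply nAy. apply (tower_below_max Y (succ A)).
    + apply tower_succ, tower_tower_below.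
    + intros z Yz succAz. apply succ_eq in succAz as [Az | ->].
      * exact (tower_below_disjoint Y z Yz Az).
      * exact (nYy Yz).
    + apply succ_eq. now right.
Qed.

Lemma succ_tower_below_point (y : S) :
  mu y ->
  f (tower_below (fun z => z = y)) y /\
  forall x, succ (tower_below (fun z => z = y)) x <-> tower_below (fun z => z = y) x \/ x = y.
Proof.
  intro muy.
  destruct (succ_tower_below (fun z => z = y)) as [y' [-> H]]; [now exists y |].
  exact H.
Qed.

Lemma tower_below_point_inj (x y : S) :
  mu x -> mu y ->
  tower_below (fun z => z = x) = tower_below (fun z => z = y) -> x = y.
Proof.
  intros mux muy E.
  destruct (succ_tower_below_point x mux) as [_ succ_x].
  destruct (succ_tower_below_point y muy) as [_ succ_y].
  assert (Hx : succ (tower_below (fun z => z = x)) x) by (apply succ_x; now right).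
  rewrite E in Hx. apply succ_y in Hx as [Hx | ->]; [| reflexivity].
  rewrite <- E in Hx. contradiction (tower_below_disjoint _ x eq_refl Hx).
Qed.

Definition tower_order (x y : S) : Prop :=
  mu x /\ mu y /\ tower_below (fun z => z = y) x.

Lemma tower_order_irrefl (x : S) : ~ tower_order x x.
Proof. intros [_ [_ Hx]]. exact (tower_below_disjoint _ x eq_refl Hx). Qed.

Lemma tower_order_trans (x y z : S) :
  tower_order x y -> tower_order y z -> tower_order x z.
Proof.
  intros [mux [muy [B [[tB B_y] Bx]]]] [_ [muz [C [[tC C_z] Cy]]]].
  repeat split; [assumption | assumption |]. exists C. split; [split; assumption |].
  destruct (tower_comparable B C tB tC) as [CB | BC].
  - contradiction (B_y y eq_refl (CB y Cy)).
  - apply BC, subset_succ. exact Bx.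
Qed.

Lemma tower_order_total (x y : S) :
  mu x -> mu y -> x <> y -> tower_order x y \/ tower_order y x.
Proof.
  intros mux muy nxy.
  pose proof (tower_tower_below (fun z => z = x)) as tx.
  pose proof (tower_tower_below (fun z => z = y)) as ty.
  destruct (tower_comparable _ _ tx ty) as [yx | xy].
  - destruct (tower_comparable _ _ ty tx) as [xy | yx'].
    + contradiction (nxy (tower_below_point_inj x y mux muy (subset_antisym _ _ xy yx))).
    + right. repeat split; [assumption | assumption |].
      apply yx', (succ_tower_below_point y muy). now right.
  - left. repeat split; [assumption | assumption |].
    apply xy, (succ_tower_below_point x mux). now right.
Qed.

Lemma tower_order_well_founded : well_founded_on mu tower_order.
Proof.
  intros Y Y_mu [y0 Yy0].
  destruct (succ_tower_below Y) as [y [Yy [_ succ_eq]]]; [exists y0; auto |].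
  exists y. split; [exact Yy |]. intros y' Yy' _ [_ [_ [B [[tB B_y] By']]]].
  destruct (tower_comparable (tower_below Y) B (tower_tower_below Y) tB) as [BA | AB].
  - exact (tower_below_disjoint Y y' Yy' (BA y' By')).
  - apply (B_y y eq_refl). apply AB, succ_eq. now right.
Qed.

Lemma tower_order_well_ordering : well_ordering_on mu tower_order.
Proof.
  split; [exact tower_order_well_founded |]. split; [| split].
  - intros x _. apply tower_order_irrefl.
  - intros x y z _ _ _. apply tower_order_trans.
  - exact tower_order_total.
Qed.

Lemma tower_order_support : support_ordering f mu tower_order.
Proof.
  split.
  - intros a b [mua [mub _]]. split; assumption.
  - intros y muy. destruct (succ_tower_below_point y muy) as [fy _].
    revert fy. apply f_mono. intros x below_x. repeat split; [| assumption | exact below_x].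
    exact (tower_sub_lfp _ (tower_tower_below _) x below_x).
Qed.

End LeastFixpoint.

End Tower.

Theorem corollary3 (S : Type) (f : (S -> Prop) -> (S -> Prop))
    (mu nu : S -> Prop) :
  monotone f ->
  is_least_fixpoint f mu ->
  is_greatest_fixpoint f nu ->
  support_ordering f nu (fun a b => nu a /\ nu b) /\
  exists prec : S -> S -> Prop,
    well_ordering_on mu prec /\ support_ordering f mu prec.
Proof.
  intros f_mono mu_lfp nu_gfp. split.
  - apply postfixpoint_support_ordering; [exact f_mono |].
    intros x nux. apply (proj1 nu_gfp). exact nux.
  - exists (tower_order S f mu). split.
    + exact (tower_order_well_ordering S f mu f_mono mu_lfp).
    + exact (tower_order_support S f mu f_mono mu_lfp).
Qed.
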